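(* Fix $k\ge1$ and let $P(z)=P^{(k)}(q,t,u;z)=\sum_{n\ge0}\sum_{\pi\in\mathcal{Q}^k_n}q^{\operatorname{asc}(\pi)}t^{\operatorname{des}(\pi)}u^{\operatorname{plat}(\pi)}\frac{z^n}{n!}$. Then $P$ satisfies the differential equation $$P'(z)=(P(z)-1+q)(P(z)-1+t)(P(z)-1+u)^{k-1}$$ (derivative with respect to $z$), with initial condition $P(0)=1$.
   Context: $\mathcal{Q}^k_n$ ($k$-Stirling permutations) is the set of permutations $\pi$ of the multiset $\{1^k,\dots,n^k\}$ (each of $1,\dots,n$ appearing $k$ times) avoiding the pattern $212$, i.e. there are no indices $i<j<\ell$ with $\pi_i=\pi_\ell>\pi_j$; $\mathcal{Q}^k_0$ consists of the empty sequence. For a sequence $\pi_1\cdots\pi_r$: $i\in\{1,\dots,r\}$ is a descent if $\pi_i>\pi_{i+1}$ or $i=r$; $i\in\{0,\dots,r-1\}$ is an ascent if $i=0$ or $\pi_i<\pi_{i+1}$; $i\in\{1,\dots,r-1\}$ is a plateau if $\pi_i=\pi_{i+1}$; $\operatorname{des},\operatorname{asc},\operatorname{plat}$ count these. *)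

From mathcomp Require Import all_boot all_algebra.
Set Implicit Arguments. Unset Strict Implicit. Unset Printing Implicit Defensive.
Import GRing.Theory.
Local Open Scope ring_scope.

Definition stir_multiset (k n : nat) : seq nat :=
  flatten [seq nseq k i | i <- iota 1 n].

Definition avoids212 (s : seq nat) : bool :=
  all (fun i => all (fun j => all (fun l =>
     ~~ [&& (i < j)%N, (j < l)%N, nth 0 s i == nth 0 s l & (nth 0 s j < nth 0 s i)%N])
     (iota 0 (size s))) (iota 0 (size s))) (iota 0 (size s)).

(* k-Stirling permutations of order n: duplicate-free list of all
   permutations of the multiset avoiding 212. *)
Definition stirling_perms (k n : nat) : seq (seq nat) :=
  [seq s <- permutations (stir_multiset k n) | avoids212 s].

(* 1-indexed entry pi_i = nth 0 s (i-1). *)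
Definition ent (s : seq nat) (i : nat) : nat := nth 0 s i.-1.

Definition des (s : seq nat) : nat :=
  count (fun i => (i == size s) || (ent s i.+1 < ent s i)%N) (iota 1 (size s)).
Definition asc (s : seq nat) : nat :=
  count (fun i => (i == 0%N) || (ent s i < ent s i.+1)%N) (iota 0 (size s)).
Definition plat (s : seq nat) : nat :=
  count (fun i => ent s i == ent s i.+1) (iota 1 (size s).-1).

(* Exponential generating functions over a commutative ring R, represented by
   their coefficient sequences: f represents sum_n f n z^n / n!. *)
Definition egf (R : comNzRingType) := nat -> R.

Definition egf_mul (R : comNzRingType) (f g : egf R) : egf R :=
  fun n => \sum_(i < n.+1) ('C(n, i))%:R * f i * g (n - i)%N.
Definition egf_one (R : comNzRingType) : egf R := fun n => if n is 0%N then 1 else 0.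
Definition egf_const (R : comNzRingType) (c : R) : egf R :=
  fun n => if n is 0%N then c else 0.
Definition egf_add (R : comNzRingType) (f g : egf R) : egf R := fun n => f n + g n.
Definition egf_pow (R : comNzRingType) (f : egf R) (m : nat) : egf R :=
  iter m (egf_mul f) (egf_one R).
Definition egf_deriv (R : comNzRingType) (f : egf R) : egf R := fun n => f n.+1.

Definition stirP (R : comNzRingType) (k : nat) (q t u : R) : egf R :=
  fun n => \sum_(s <- stirling_perms k n) q ^+ asc s * t ^+ des s * u ^+ plat s.

(* A k-Stirling permutation on a label set B with minimum b is cut by the k
   copies of b into k + 1 blocks, and it avoids 212 exactly when the blocks avoid
   212 and use pairwise disjoint labels; so the block contents form a splitting
   of the other labels and each nonempty block is a k-Stirling permutation of its
   labels.  Padding words with a 0 at both ends, asc, des and plat count the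
   rising, falling and level adjacent pairs, and the weight becomes a product
   over adjacent pairs.  A nonempty block starts with a rise and ends with a fall
   whatever its smaller neighbours are, so it contributes its own weight, while
   an empty block contributes the single pair 0b, bb or b0, i.e. q, u or t.  By
   strong induction on |B| the total weight depends only on |B|, and summing over
   splittings is the product of exponential generating functions, whence
   P' = (P - 1 + q) (P - 1 + u)^(k-1) (P - 1 + t). *)

From mathcomp Require Import all_boot all_algebra.
From mathcomp Require Import zify ring.
From Stdlib Require Import FunctionalExtensionality.
Set Implicit Arguments. Unset Strict Implicit. Unset Printing Implicit Defensive.
Import GRing.Theory.

Lemma count_iotaS (P : pred nat) m n :
  count P (iota m.+1 n) = count (fun i => P i.+1) (iota m n).
Proof. by rewrite -add1n iotaDl count_map. Qed.

Lemma count_pairmap (P : rel nat) x s :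
  count id (pairmap P x s) =
  count (fun i => P (nth 0 (x :: s) i) (nth 0 s i)) (iota 0 (size s)).
Proof. by elim: s x => [|y s IHs] x //=; rewrite count_iotaS IHs. Qed.

Lemma nth_cat_seq0 (s : seq nat) i : nth 0 (s ++ [:: 0]) i = nth 0 s i.
Proof.
rewrite nth_cat; case: ltnP => // le_s_i.
by rewrite [RHS]nth_default //; case: (i - size s) => [|[]].
Qed.

(* [ent] is stated with the ring zero of [nat]; this form lets the lemmas on
   [nth 0%N] apply. *)
Lemma entS s i : ent s i.+1 = nth 0 s i.
Proof. by []. Qed.

Section PaddedStatistics.
Variable s : seq nat.
Hypothesis s_pos : 0 \notin s.

Let nth_pos i : i < size s -> 0 < nth 0 s i.
Proof. by move=> lt_i_s; rewrite lt0n; apply: contraNneq s_pos => <-; apply: mem_nth. Qed.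

Lemma asc_padded : asc s = count id (pairmap ltn 0 (s ++ [:: 0])).
Proof.
rewrite count_pairmap size_cat addn1 /asc -addn1 iotaD count_cat /= addn0.
have -> : nth 0 (0 :: s ++ [:: 0]) (size s) < nth 0 (s ++ [:: 0]) (size s) = false.
  by rewrite nth_cat_seq0 [nth 0 s _]nth_default.
rewrite addn0; apply: eq_in_count => -[|i]; rewrite mem_iota /= => lt_i_s.
  by rewrite nth_cat_seq0 nth_pos.
by rewrite !entS !nth_cat_seq0.
Qed.

Lemma des_padded : des s = count id (pairmap gtn 0 (s ++ [:: 0])).
Proof.
rewrite count_pairmap size_cat addn1 /des /= add0n.
apply: eq_in_count => -[|i]; rewrite mem_iota //= add1n ltnS => lt_i_s.
rewrite !entS /= !nth_cat_seq0; case: eqP => [->|_] //.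
by rewrite [nth 0 s (size s)]nth_default // nth_pos.
Qed.

Lemma plat_padded : s != [::] -> plat s = count id (pairmap eq_op 0 (s ++ [:: 0])).
Proof.
rewrite -size_eq0 -lt0n => s_gt0.
rewrite count_pairmap size_cat addn1 /plat /= nth_cat_seq0 eq_sym eqn0Ngt nth_pos //.
move: s_gt0 nth_pos; case def_n: (size s) => [|n] // _ nth_pos'.
rewrite succnK -[n.+1]addn1 iotaD count_cat /= !nth_cat_seq0 add0n add1n.
rewrite [nth 0 s n.+1]nth_default ?def_n // eqn0Ngt nth_pos' // add0n !addn0.
apply: eq_in_count => i; rewrite mem_iota => /andP[i_gt0 _].
by rewrite -(prednK i_gt0) !entS /= !nth_cat_seq0.
Qed.

End PaddedStatistics.

Section Weights.
Variables (R : comNzRingType) (q t u : R).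
Local Open Scope ring_scope.

Definition pair_weight (x y : nat) : R :=
  if (x < y)%N then q else if (y < x)%N then t else u.

Definition path_weight (x : nat) (s : seq nat) : R :=
  \prod_(r <- pairmap pair_weight x s) r.

Definition weight (s : seq nat) : R := q ^+ asc s * t ^+ des s * u ^+ plat s.

Lemma path_weight_cons x y s : path_weight x (y :: s) = pair_weight x y * path_weight y s.
Proof. exact: big_cons. Qed.

Lemma path_weight_cat x s1 s2 :
  path_weight x (s1 ++ s2) = path_weight x s1 * path_weight (last x s1) s2.
Proof. by rewrite /path_weight pairmap_cat big_cat. Qed.

Lemma path_weightE x s :
  path_weight x s = q ^+ count id (pairmap ltn x s) * t ^+ count id (pairmap gtn x s)
                    * u ^+ count id (pairmap eq_op x s).
Proof.
elim: s x => [|y s IHs] x; first by rewrite /path_weight big_nil !mulr1.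
rewrite path_weight_cons IHs /pair_weight /=.
by case: ltngtP => _; rewrite !exprS; ring.
Qed.

Lemma weight_padded s : s != [::] -> 0 \notin s -> weight s = path_weight 0 (s ++ [:: 0]).
Proof. by move=> s_nil s_pos; rewrite path_weightE /weight asc_padded ?des_padded ?plat_padded. Qed.

Lemma path_weight_peak x y z s : (x < z)%N -> (y < last z s)%N ->
  path_weight x (z :: s ++ [:: y]) = q * path_weight z s * t.
Proof.
move=> lt_x_z lt_y_l; rewrite path_weight_cons path_weight_cat /path_weight /= big_seq1.
by rewrite /pair_weight lt_x_z ltnNge (ltnW lt_y_l) lt_y_l mulrA.
Qed.

Lemma weight_block x y s : s != [::] -> all (ltn x) s -> all (ltn y) s ->
  path_weight x (s ++ [:: y]) = weight s.
Proof.
case: s => [|z s] // _ /allP s_gt_x /allP s_gt_y.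
have z_gt : (x < z)%N := s_gt_x z (mem_head z s).
have l_gt : (y < last z s)%N := s_gt_y _ (mem_last z s).
have z_pos := leq_ltn_trans (leq0n x) z_gt.
have l_pos := leq_ltn_trans (leq0n y) l_gt.
have s_pos : 0 \notin z :: s by apply/negP => /s_gt_x.
by rewrite weight_padded // !cat_cons !path_weight_peak.
Qed.

Lemma path_weight_pivot x a s1 s2 :
  path_weight x ((s1 ++ a :: s2) ++ [:: 0%N]) =
  path_weight x (s1 ++ [:: a]) * path_weight a (s2 ++ [:: 0%N]).
Proof. by rewrite -catA cat_cons -cat1s catA path_weight_cat last_cat. Qed.

End Weights.

Lemma avoids212P s :
  reflect (forall i j l, i < j -> j < l -> l < size s ->
             nth 0 s i = nth 0 s l -> nth 0 s i <= nth 0 s j)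
          (avoids212 s).
Proof.
apply: (iffP idP) => [/allP av i j l lt_ij lt_jl lt_l eq_il | av].
  have in_s m : m <= l -> m \in iota 0 (size s) by rewrite mem_iota; lia.
  move: av => /(_ i (in_s i _))/allP/(_ j (in_s j _))/allP/(_ l (in_s l _)).
  by rewrite lt_ij lt_jl eq_il eqxx ltnNge /= negbK; apply; lia.
apply/allP => i _; apply/allP => j _; apply/allP => l; rewrite mem_iota add0n => /andP[_ lt_l].
by apply/negP => /and4P[lt_ij lt_jl /eqP eq_il]; rewrite ltnNge (av i j l).
Qed.

Section Pivot.
Variables (a : nat) (s1 s2 : seq nat).
Hypotheses (s1_gt : all (ltn a) s1) (s2_ge : all (leq a) s2).

Let s := s1 ++ a :: s2.

Let gt_a v : v \in s1 -> a < v. Proof. exact: allP s1_gt v. Qed.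
Let ge_a v : v \in s2 -> a <= v. Proof. exact: allP s2_ge v. Qed.

Let nth_left i : i < size s1 -> nth 0 s i = nth 0 s1 i.
Proof. by move=> lt_i; rewrite nth_cat lt_i. Qed.

Let nth_pivot : nth 0 s (size s1) = a.
Proof. by rewrite nth_cat ltnn subnn. Qed.

Let nth_right i : nth 0 s (size s1 + i.+1) = nth 0 s2 i.
Proof. by rewrite nth_cat ltnNge leq_addr /= addKn. Qed.

Let size_s : size s = size s1 + (size s2).+1.
Proof. by rewrite size_cat. Qed.

Let right_index i : size s1 < i -> {i' | i = size s1 + i'.+1}.
Proof. by move=> lt_i; exists (i - size s1).-1; lia. Qed.

Lemma avoids212_pivot_parts :
  avoids212 s -> [&& avoids212 s1, avoids212 s2 & ~~ has (fun v => v \in s1) s2].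
Proof.
move/avoids212P => av; apply/and3P; split.
- apply/avoids212P => i j l lt_ij lt_jl lt_l.
  by rewrite -!nth_left; try apply: av; rewrite ?size_s; lia.
- apply/avoids212P => i j l lt_ij lt_jl lt_l.
  by rewrite -!nth_right; apply: av; rewrite ?size_s; lia.
apply/hasPn => v v_s2; apply/negP => v_s1.
have lt_v2 : index v s2 < size s2 by rewrite index_mem.
have lt_pivot : size s1 < size s1 + (index v s2).+1 by lia.
have lt_size : size s1 + (index v s2).+1 < size s by rewrite size_s; lia.
have := av _ _ _ (_ : index v s1 < size s1) lt_pivot lt_size.
rewrite nth_pivot nth_right nth_left ?index_mem // !nth_index //.
by rewrite leqNgt gt_a //; move/(_ v_s1 erefl).
Qed.

Lemma avoids212_pivot_of_parts :
  [&& avoids212 s1, avoids212 s2 & ~~ has (fun v => v \in s1) s2] -> avoids212 s.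
Proof.
case/and3P => /avoids212P av1 /avoids212P av2 /hasPn disj.
apply/avoids212P => i j l lt_ij lt_jl; rewrite size_s => lt_l.
case: (ltngtP l (size s1)) lt_jl lt_l => [lt_l1 | /right_index[l' ->] | ->] lt_jl lt_l.
- by rewrite !nth_left; try apply: av1; lia.
- have lt_l2 : l' < size s2 by lia.
  rewrite nth_right.
  case: (ltngtP i (size s1)) lt_ij => [lt_i1 | /right_index[i' ->] | ->] lt_ij.
  + rewrite (nth_left lt_i1) => eq_il; move: (disj _ (mem_nth 0 lt_l2)).
    by rewrite -eq_il mem_nth.
  + have [j' def_j] : {j' | j = size s1 + j'.+1} by apply: right_index; lia.
    by subst j; rewrite !nth_right => eq_il; apply: (av2 _ _ l') => //; lia.
  + have [j' def_j] : {j' | j = size s1 + j'.+1} by apply: right_index.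
    have lt_j2 : j' < size s2 by lia.
    by subst j; rewrite nth_pivot nth_right ge_a // mem_nth.
- have lt_i1 : i < size s1 by lia.
  rewrite nth_pivot nth_left // => eq_ia.
  by have := gt_a (mem_nth 0 lt_i1); rewrite eq_ia ltnn.
Qed.

Lemma avoids212_pivot :
  avoids212 s = [&& avoids212 s1, avoids212 s2 & ~~ has (fun v => v \in s1) s2].
Proof. by apply/idP/idP => [/avoids212_pivot_parts | /avoids212_pivot_of_parts]. Qed.

End Pivot.

Section BinomialConvolution.
Variable R : comNzRingType.
Local Open Scope ring_scope.

Definition binconv n (F : nat -> nat -> R) : R :=
  \sum_(i < n.+1) 'C(n, i)%:R * F i (n - i)%N.

Lemma binconv0 F : binconv 0 F = F 0%N 0%N.
Proof. by rewrite /binconv big_ord1 bin0 mul1r. Qed.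

Lemma eq_binconv n F G : (forall i j, F i j = G i j) -> binconv n F = binconv n G.
Proof. by move=> eq_FG; apply: eq_bigr => i _; rewrite eq_FG. Qed.

Lemma binconvD n F G :
  binconv n (fun i j => F i j + G i j) = binconv n F + binconv n G.
Proof. by rewrite /binconv -big_split; apply: eq_bigr => i _; rewrite mulrDr. Qed.

Lemma mulr_binconv n c F : c * binconv n F = binconv n (fun i j => c * F i j).
Proof. by rewrite /binconv mulr_sumr; apply: eq_bigr => i _; rewrite mulrCA. Qed.

Lemma binconvS n F :
  binconv n.+1 F = binconv n (fun i j => F i.+1 j) + binconv n (fun i j => F i j.+1).
Proof.
rewrite /binconv big_ord_recl bin0 mul1r subn0.
have -> : \sum_(i < n.+1) 'C(n.+1, bump 0 i)%:R * F (bump 0 i) (n.+1 - bump 0 i)%N =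
          \sum_(i < n.+1) 'C(n, i)%:R * F i.+1 (n - i)%N +
          \sum_(i < n.+1) 'C(n, i.+1)%:R * F i.+1 (n - i)%N.
  rewrite -big_split; apply: eq_bigr => i _ /=.
  by rewrite /bump /= add1n binS subSS natrD mulrDl addrC.
rewrite addrCA; congr (_ + _).
rewrite big_ord_recr /= bin_small // mul0r addr0.
rewrite [in RHS]big_ord_recl bin0 subn0 mul1r; congr (_ + _).
by apply: eq_bigr => i _ /=; rewrite /bump /= add1n subnSK.
Qed.

Lemma binconv_exchange n (F : nat -> nat -> nat -> R) :
  binconv n (fun i j => binconv j (F i)) = binconv n (fun i j => binconv j (fun a => F a i)).
Proof.
elim: n F => [|n IHn] F; first by rewrite !binconv0.
rewrite !binconvS (@eq_binconv n (fun i j => binconv j.+1 (F i)) _ (fun i j => binconvS j _)).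
rewrite (@eq_binconv n (fun i j => binconv j.+1 (F^~ i)) _ (fun i j => binconvS j _)).
rewrite !binconvD (IHn (fun i a b => F i.+1 a b)) (IHn (fun i a b => F i a.+1 b)).
by rewrite (IHn (fun i a b => F i a b.+1)) addrCA addrA.
Qed.

Lemma egf_mulE (f g : egf R) n : egf_mul f g n = binconv n (fun i j => f i * g j).
Proof. by apply: eq_bigr => i _; rewrite mulrA. Qed.

Lemma egf_mulCA (f g h : egf R) : egf_mul f (egf_mul g h) = egf_mul g (egf_mul f h).
Proof.
apply: functional_extensionality => n; rewrite !egf_mulE.
under eq_binconv do rewrite egf_mulE mulr_binconv.
under [RHS]eq_binconv do rewrite egf_mulE mulr_binconv.
by rewrite binconv_exchange; do 2!apply: eq_binconv => ? ?; rewrite mulrCA.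
Qed.

Lemma egf_mulr1 (f : egf R) : egf_mul f (egf_one R) = f.
Proof.
apply: functional_extensionality => n.
rewrite /egf_mul big_ord_recr /= binn subnn mulr1 mul1r big1 ?add0r // => i _.
by rewrite /egf_one -[(n - i)%N]prednK ?subn_gt0 // mulr0.
Qed.

Lemma iter_egf_mul (f g : egf R) j : iter j (egf_mul f) g = egf_mul g (egf_pow f j).
Proof. by elim: j => [|j IHj] /=; rewrite ?egf_mulr1 // IHj egf_mulCA. Qed.

End BinomialConvolution.

Section Splittings.
Variable T : eqType.

Fixpoint splittings (s : seq T) : seq (seq T * seq T) :=
  if s is x :: s' then
    [seq (x :: p.1, p.2) | p <- splittings s'] ++ [seq (p.1, x :: p.2) | p <- splittings s']
  else [:: ([::], [::])].

Lemma perm_splittings s p : p \in splittings s -> perm_eq s (p.1 ++ p.2).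
Proof.
elim: s p => [|x s IHs] p /=; first by rewrite inE => /eqP ->.
rewrite mem_cat => /orP[] /mapP[p' /IHs perm_p' ->] /=; first by rewrite perm_cons.
by rewrite perm_sym -[x :: p'.2]cat1s perm_catCA /= perm_cons perm_sym.
Qed.

Lemma subseq_splittings s p : p \in splittings s -> subseq p.1 s && subseq p.2 s.
Proof.
elim: s p => [|x s IHs] p /=; first by rewrite inE => /eqP ->.
rewrite mem_cat => /orP[] /mapP[p' /IHs /andP[sub1 sub2] ->]; apply/andP; split.
- by rewrite /= eqxx.
- exact: subseq_trans sub2 (subseq_cons s x).
- exact: subseq_trans sub1 (subseq_cons s x).
- by rewrite /= eqxx.
Qed.

Lemma filter_splittings (P : pred T) s : (filter P s, filter (predC P) s) \in splittings s.
Proof.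
elim: s => [|x s IHs] //=; rewrite mem_cat.
by case: (P x) => /=; rewrite (map_f _ IHs) ?orbT.
Qed.

Lemma uniq_splittings s : uniq s -> uniq (splittings s).
Proof.
elim: s => [|x s IHs] //= /andP[x_s /IHs uniq_s].
rewrite cat_uniq !map_inj_uniq // ?uniq_s; try by move=> [? ?] [? ?] [-> ->].
rewrite andbT; apply/hasPn => _ /mapP[p p_s ->]; apply/mapP => -[p' _ [eq_p1 _]].
have /andP[sub1 _] := subseq_splittings p_s.
by move: x_s; rewrite (mem_subseq sub1) // eq_p1 mem_head.
Qed.

Lemma splittings_inj s p p' : uniq s -> p \in splittings s -> p' \in splittings s ->
  p.1 =i p'.1 -> p = p'.
Proof.
move=> uniq_s p_s p'_s eq_p1.
have eq_subseq a b : subseq a s -> subseq b s -> a =i b -> a = b.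
  move=> /(subseq_uniqP uniq_s) def_a /(subseq_uniqP uniq_s) def_b eq_ab.
  by rewrite def_a def_b; apply: eq_filter.
have /andP[sub1 sub2] := subseq_splittings p_s.
have /andP[sub1' sub2'] := subseq_splittings p'_s.
have e1 := eq_subseq _ _ sub1 sub1' eq_p1.
have e2 : p.2 = p'.2.
  apply: eq_subseq => //; apply: perm_mem.
  by have := perm_splittings p'_s; rewrite -e1 (permPl (perm_splittings p_s)) perm_cat2l.
by case: p p' e1 e2 {p_s p'_s eq_p1 sub1 sub2 sub1' sub2'} => [? ?] [? ?] /= -> ->.
Qed.

End Splittings.

Lemma sum_splittings (R : comNzRingType) (T : eqType) (s : seq T) (F : nat -> nat -> R) :
  (\sum_(p <- splittings s) F (size p.1) (size p.2) = binconv (size s) F)%R.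
Proof.
elim: s F => [|x s IHs] F /=; first by rewrite big_seq1 binconv0.
by rewrite big_cat !big_map /= binconvS -IHs -IHs.
Qed.

Lemma uniq_allpairs_pair (S T : eqType) (s : seq S) (t : S -> seq T) :
  uniq s -> (forall x, uniq (t x)) -> uniq [seq (x, y) | x <- s, y <- t x].
Proof.
move=> uniq_s uniq_t; apply: allpairs_uniq_dep => // -[x y] [x' y'] _ _ /= [eq_x].
by move: y'; rewrite -eq_x => y' ->.
Qed.

Definition perms212 (s : seq nat) : seq (seq nat) := [seq p <- permutations s | avoids212 p].

Lemma mem_perms212 p s : (p \in perms212 s) = perm_eq p s && avoids212 p.
Proof. by rewrite mem_filter mem_permutations andbC. Qed.

Lemma uniq_perms212 s : uniq (perms212 s).
Proof. exact/filter_uniq/permutations_uniq. Qed.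

Section KCopies.
Variables (k : nat).

Definition kcopies (s : seq nat) : seq nat := flatten [seq nseq k v | v <- s].

Lemma kcopies_cons v s : kcopies (v :: s) = nseq k v ++ kcopies s.
Proof. by []. Qed.

Lemma count_kcopies (P : pred nat) s : count P (kcopies s) = k * count P s.
Proof.
elim: s => [|v s IHs]; first by rewrite muln0.
by rewrite kcopies_cons count_cat IHs count_nseq mulnDr mulnC.
Qed.

Lemma filter_kcopies (P : pred nat) s : filter P (kcopies s) = kcopies (filter P s).
Proof.
elim: s => [|v s IHs] //; rewrite kcopies_cons filter_cat filter_nseq IHs /=.
by case: (P v); rewrite ?mul1n ?mul0n.
Qed.

Lemma size_kcopies s : size (kcopies s) = k * size s.
Proof. by rewrite -!count_predT count_kcopies. Qed.

Hypothesis k_gt0 : 0 < k.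

Lemma mem_kcopies v s : (v \in kcopies s) = (v \in s).
Proof. by rewrite -!has_pred1 !has_count count_kcopies muln_gt0 k_gt0. Qed.

End KCopies.

Section MinimumDecomposition.
Variables (k a m : nat) (C : seq nat).
Hypotheses (k_gt0 : 0 < k) (uniq_C : uniq C) (C_gt : all (ltn a) C).

Let gt_a v : v \in C -> a < v. Proof. exact: allP C_gt v. Qed.

Let mem_nseq_kcopies v n s : v \in nseq n a ++ kcopies k s -> v = a \/ v \in s.
Proof.
by rewrite mem_cat mem_nseq mem_kcopies // => /orP[/andP[_ /eqP]|]; [left | right].
Qed.

Lemma glue_perms212 p sg s' : p \in splittings C ->
  sg \in perms212 (kcopies k p.1) -> s' \in perms212 (nseq m a ++ kcopies k p.2) ->
  sg ++ a :: s' \in perms212 (nseq m.+1 a ++ kcopies k C).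
Proof.
move=> p_C; rewrite !mem_perms212 => /andP[perm_sg av_sg] /andP[perm_s' av_s'].
have perm_C := perm_splittings p_C.
have /andP[sub1 sub2] := subseq_splittings p_C.
have sg_p1 v : v \in sg -> v \in p.1 by rewrite (perm_mem perm_sg) mem_kcopies.
have s'_p2 v : v \in s' -> v = a \/ v \in p.2 by rewrite (perm_mem perm_s'); apply: mem_nseq_kcopies.
have sg_gt : all (ltn a) sg by apply/allP => v /sg_p1 /(mem_subseq sub1) /gt_a.
have s'_ge : all (leq a) s'.
  by apply/allP => v /s'_p2 [-> // | /(mem_subseq sub2) /gt_a /ltnW].
rewrite avoids212_pivot // av_sg av_s' /=; apply/andP; split.
  apply/permP => P; rewrite count_cat /= (permP perm_sg) (permP perm_s').
  by rewrite !count_cat !count_nseq !count_kcopies (permP perm_C) count_cat /=; lia.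
apply/hasPn => v /s'_p2 [-> | v_p2]; apply/negP => /sg_p1 v_p1.
  by have := gt_a (mem_subseq sub1 v_p1); rewrite ltnn.
have : uniq (p.1 ++ p.2) by rewrite -(perm_uniq perm_C).
by rewrite cat_uniq => /and3P[_ /hasPn /(_ v v_p2)]; rewrite v_p1.
Qed.

Lemma split_perms212 s : s \in perms212 (nseq m.+1 a ++ kcopies k C) ->
  exists p sg s', [/\ p \in splittings C, sg \in perms212 (kcopies k p.1),
                     s' \in perms212 (nseq m a ++ kcopies k p.2) & s = sg ++ a :: s'].
Proof.
rewrite mem_perms212 => /andP[perm_s av_s].
have s_vals v : v \in s -> v = a \/ v \in C by rewrite (perm_mem perm_s); apply: mem_nseq_kcopies.
have a_s : a \in s by rewrite (perm_mem perm_s) mem_cat mem_nseq eqxx.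
set sg := take (index a s) s; set s' := drop (index a s).+1 s.
have def_s : s = sg ++ a :: s'.
  by rewrite -[LHS](cat_take_drop (index a s)) (drop_nth 0) ?index_mem ?nth_index.
have a_sg : a \notin sg by rewrite in_take // ltnn.
have sg_gt : all (ltn a) sg.
  apply/allP => v v_sg; case: (s_vals v (mem_take v_sg)) => [eq_va | /gt_a //].
  by move: a_sg; rewrite -eq_va v_sg.
have s'_ge : all (leq a) s' by apply/allP => v /mem_drop /s_vals [-> // | /gt_a /ltnW].
move: av_s; rewrite def_s avoids212_pivot // => /and3P[av_sg av_s' disj].
pose P v := v \in sg.
have filter_s : filter P s = sg /\ filter (predC P) s = a :: s'.
  have filter_nil (Q : pred nat) w : ~~ has Q w -> filter Q w = [::].
    by rewrite has_filter negbK => /eqP.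
  rewrite def_s !filter_cat /= /P (negbTE a_sg) (all_filterP (allss sg)).
  rewrite (all_filterP (_ : all (predC P) s')) ?all_predC // !filter_nil ?cats0 //.
  by rewrite has_predC negbK allss.
exists (filter P C, filter (predC P) C), sg, s'; split => //; first exact: filter_splittings.
- rewrite mem_perms212 av_sg andbT -{1}filter_s.1.
  have := perm_filter P perm_s; rewrite filter_cat filter_nseq filter_kcopies /P.
  by rewrite (negbTE a_sg).
- rewrite mem_perms212 av_s' andbT -(perm_cons a) -filter_s.2.
  have := perm_filter (predC P) perm_s; rewrite filter_cat filter_nseq filter_kcopies /P /=.
  by rewrite a_sg mul1n.
Qed.

Lemma glue_perms212_inj p1 sg1 s1 p2 sg2 s2 :
  p1 \in splittings C -> sg1 \in perms212 (kcopies k p1.1) ->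
  p2 \in splittings C -> sg2 \in perms212 (kcopies k p2.1) ->
  sg1 ++ a :: s1 = sg2 ++ a :: s2 -> [/\ p1 = p2, sg1 = sg2 & s1 = s2].
Proof.
have vals (p : seq nat * seq nat) sg : sg \in perms212 (kcopies k p.1) -> sg =i p.1.
  by rewrite mem_perms212 => /andP[/perm_mem eq_sg _] v; rewrite eq_sg mem_kcopies.
have a_sg (p : seq nat * seq nat) sg : p \in splittings C -> sg \in perms212 (kcopies k p.1) -> a \notin sg.
  move=> /subseq_splittings /andP[sub1 _] /vals ->.
  by apply/negP => /(mem_subseq sub1) /gt_a; rewrite ltnn.
move=> p1_C sg1_p1 p2_C sg2_p2 /eqP.
rewrite eqseq_pivot2l ?(a_sg _ _ p1_C sg1_p1) ?(a_sg _ _ p2_C sg2_p2) //.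
move=> /andP[/eqP eq_sg /eqP ->].
split=> //; apply: splittings_inj p1_C p2_C _ => // v.
by rewrite -(vals _ _ sg1_p1) eq_sg (vals _ _ sg2_p2).
Qed.

Lemma sum_perms212_min (R : nmodType) (phi : seq nat -> R) :
  (\sum_(s <- perms212 (nseq m.+1 a ++ kcopies k C)) phi s =
   \sum_(p <- splittings C) \sum_(sg <- perms212 (kcopies k p.1))
      \sum_(s' <- perms212 (nseq m a ++ kcopies k p.2)) phi (sg ++ a :: s'))%R.
Proof.
pose blocks p := [seq (sg, s') | sg <- perms212 (kcopies k p.1),
                                 s' <- perms212 (nseq m a ++ kcopies k p.2)].
pose L := [seq (p, x) | p <- splittings C, x <- blocks p].
pose glue (x : (seq nat * seq nat) * (seq nat * seq nat)) := x.2.1 ++ a :: x.2.2.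
have -> : (\sum_(p <- splittings C) \sum_(sg <- perms212 (kcopies k p.1))
             \sum_(s' <- perms212 (nseq m a ++ kcopies k p.2)) phi (sg ++ a :: s') =
           \sum_(s <- map glue L) phi s)%R.
  by rewrite big_map big_allpairs_dep; apply: eq_bigr => p _; rewrite big_allpairs.
apply/perm_big/uniq_perm; first exact: uniq_perms212.
  have uniq_L : uniq L.
    apply: uniq_allpairs_pair => [|p]; first exact: uniq_splittings.
    by apply: uniq_allpairs_pair => [|sg]; apply: uniq_perms212.
  rewrite map_inj_in_uniq //.
  move=> x y /allpairsPdep[p [b [p_C /allpairsPdep[sg [s' [sg_p _ ->]]] ->]]].
  move=> /allpairsPdep[p' [b' [p'_C /allpairsPdep[sg' [s'' [sg'_p _ ->]]] ->]]] /=.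
  by case/(glue_perms212_inj p_C sg_p p'_C sg'_p) => -> -> /= ->.
move=> s; apply/idP/mapP => [/split_perms212[p [sg [s' [p_C sg_p s'_p ->]]]] | [x]].
  by exists (p, (sg, s')) => //; apply/allpairsPdep; exists p, (sg, s'); rewrite p_C allpairs_f.
move=> /allpairsPdep[p [b [p_C /allpairsPdep[sg [s' [sg_p s'_p ->]]] ->]]] ->.
exact: glue_perms212 p_C sg_p s'_p.
Qed.

End MinimumDecomposition.

Section StirlingEgf.
Variables (R : comNzRingType) (k : nat) (q t u : R).
Hypothesis k_gt0 : 0 < k.
Local Open Scope ring_scope.

Let P := stirP k q t u.
Let shift (c : R) := egf_add P (egf_const (c - 1)).

Definition stirling_sum (B : seq nat) : R :=
  \sum_(s <- perms212 (kcopies k B)) weight q t u s.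

Lemma stirP0 : P 0 = 1.
Proof. by rewrite /P /stirP big_seq1 /weight !expr0 !mulr1. Qed.

Let tail_egf j := iter j (egf_mul (shift u)) (shift t).

Section Induction.
Variable n : nat.
Hypothesis IHn : forall B, (size B <= n)%N -> sorted ltn B -> 0 \notin B ->
  stirling_sum B = P (size B).

Let padded_sum x j a C :=
  \sum_(s <- perms212 (nseq j a ++ kcopies k C)) path_weight q t u x (s ++ [:: 0%N]).

Lemma sum_block_weights x y B :
  sorted ltn B -> all (ltn x) B -> all (ltn y) B -> (size B <= n)%N ->
  \sum_(sg <- perms212 (kcopies k B)) path_weight q t u x (sg ++ [:: y]) =
  shift (pair_weight q t u x y) (size B).
Proof.
case: B => [|b B] sorted_B B_gt_x B_gt_y le_B_n.
  by rewrite big_seq1 /shift /egf_add /egf_const stirP0 /path_weight big_seq1 addrC subrK.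
rewrite /shift /egf_add /egf_const addr0 -IHn //; last by apply/negP => /(allP B_gt_x).
apply: eq_big_seq => sg; rewrite mem_perms212 => /andP[perm_sg _].
have sg_B v : v \in sg -> v \in b :: B by rewrite (perm_mem perm_sg) mem_kcopies.
apply: weight_block; last 2 first.
- by apply/allP => v /sg_B; apply: (allP B_gt_x).
- by apply/allP => v /sg_B; apply: (allP B_gt_y).
by rewrite -size_eq0 (perm_size perm_sg) size_kcopies muln_eq0 negb_or -lt0n k_gt0.
Qed.

Lemma padded_sum_pivot x j a C : (x <= a)%N ->
  sorted ltn C -> all (ltn a) C -> (size C <= n)%N ->
  (forall C', sorted ltn C' -> all (ltn a) C' -> (size C' <= n)%N ->
     padded_sum a j a C' = tail_egf j (size C')) ->
  padded_sum x j.+1 a C = egf_mul (shift (pair_weight q t u x a)) (tail_egf j) (size C).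
Proof.
move=> le_xa sorted_C C_gt le_C_n tail_j.
rewrite /padded_sum sum_perms212_min ?(sorted_uniq ltn_trans ltnn) //.
rewrite egf_mulE -sum_splittings; apply: eq_big_seq => p /subseq_splittings /andP[sub1 sub2].
have part_gt b p' : subseq p' C -> (b <= a)%N -> all (ltn b) p'.
  by move=> sub_p' le_ba; apply/allP => v /(mem_subseq sub_p') /(allP C_gt); apply: leq_ltn_trans.
under eq_bigr do under eq_bigr do rewrite path_weight_pivot.
rewrite -big_distrlr /= sum_block_weights -/(padded_sum a j a p.2) ?tail_j ?part_gt
  ?(subseq_sorted ltn_trans sub1 sorted_C) ?(subseq_sorted ltn_trans sub2 sorted_C) //.
- exact: leq_trans (size_subseq sub2) le_C_n.
- exact: leq_trans (size_subseq sub1) le_C_n.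
Qed.

Lemma padded_sum_tail j a C : (0 < a)%N -> sorted ltn C -> all (ltn a) C ->
  (size C <= n)%N -> padded_sum a j a C = tail_egf j (size C).
Proof.
move=> a_gt0; elim: j C => [|j IHj] C sorted_C C_gt le_C_n.
  rewrite /padded_sum sum_block_weights //; first by rewrite /pair_weight ltn0 a_gt0.
  by apply/allP => v /(allP C_gt); apply: ltn_trans a_gt0.
by rewrite padded_sum_pivot // /pair_weight ltnn.
Qed.

Lemma stirling_sum_consE b C : (0 < b)%N -> sorted ltn (b :: C) -> (size C <= n)%N ->
  stirling_sum (b :: C) = egf_mul (shift q) (tail_egf k.-1) (size C).
Proof.
move=> b_gt0 sorted_bC le_C_n.
have sorted_C := path_sorted sorted_bC.
have C_gt : all (ltn b) C := order_path_min ltn_trans sorted_bC.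
have -> : stirling_sum (b :: C) = padded_sum 0 k b C.
  apply: eq_big_seq => s; rewrite mem_perms212 => /andP[perm_s _]; apply: weight_padded.
    by rewrite -size_eq0 (perm_size perm_s) size_cat size_nseq -lt0n ltn_addr.
  rewrite (perm_mem perm_s) mem_cat mem_nseq mem_kcopies //.
  by apply/negP => /orP[/andP[_ /eqP b0] | /(allP C_gt)] //; subst b.
rewrite -[X in padded_sum _ X](prednK k_gt0) padded_sum_pivot //.
  by rewrite /pair_weight b_gt0.
by move=> C'; apply: padded_sum_tail.
Qed.

Lemma stirling_sum_cons b C : (0 < b)%N -> sorted ltn (b :: C) -> size C = n ->
  stirling_sum (b :: C) = P n.+1.
Proof.
move=> b_gt0 sorted_bC size_C; rewrite stirling_sum_consE ?size_C //.
have -> : P n.+1 = stirling_sum (1%N :: iota 2 n) by [].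
by rewrite stirling_sum_consE ?size_iota // (iota_ltn_sorted 1 n.+1).
Qed.

End Induction.

Lemma stirling_sum_size B : sorted ltn B -> 0 \notin B -> stirling_sum B = P (size B).
Proof.
move: {2}(size B) (leqnn (size B)) => n; elim: n B => [|n IHn] B.
  by rewrite leqn0 => /nilP ->.
rewrite leq_eqVlt ltnS => /orP[/eqP | /IHn //].
case: B => [|b C] //= [size_C] sorted_bC bC_pos.
rewrite size_C; apply: (stirling_sum_cons IHn) => //.
by rewrite lt0n eq_sym; case/norP: bC_pos.
Qed.

Lemma stirP_succ n : P n.+1 = egf_mul (shift q) (tail_egf k.-1) n.
Proof.
rewrite -{2}(size_iota 2 n); apply: (stirling_sum_consE (n := n)).
- by move=> B _; apply: stirling_sum_size.
- by [].
- exact: iota_ltn_sorted 1 n.+1.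
- by rewrite size_iota.
Qed.

End StirlingEgf.

Unset Implicit Arguments.
Local Open Scope ring_scope.

Theorem theorem4p7 (R : comNzRingType) (k : nat) (hk : (1 <= k)%N) (q t u : R) :
  let P := stirP k q t u in
  egf_deriv P =
    egf_mul (egf_add P (egf_const (q - 1)))
      (egf_mul (egf_add P (egf_const (t - 1)))
               (egf_pow (egf_add P (egf_const (u - 1))) (k - 1)))
  /\ P 0%N = 1.
Proof.
move=> P; split; last exact: stirP0.
apply: functional_extensionality => n.
by rewrite /P /egf_deriv stirP_succ // iter_egf_mul subn1.
Qed.
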